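(* For every finite simple graph $G$ there exists a (not necessarily connected) supergraceful graph $H$ containing a subgraph isomorphic to $G$.
   Context: For a graph $H$ with $p$ nodes and $q$ edges, a total labeling is a map $\varphi: V(H) \to \{1,\dots,p+q\}$ such that the $p$ node labels $\varphi(x)$ and the $q$ edge labels $|\varphi(x)-\varphi(y)|$, $xy \in E(H)$, are all pairwise distinct, together forming exactly $\{1,\dots,p+q\}$; $H$ is supergraceful if it admits a total labeling. *)

From mathcomp Require Import all_boot.
Set Implicit Arguments. Unset Strict Implicit. Unset Printing Implicit Defensive.

Record sgraph := SGraph {
  svert : finType;
  sadj : rel svert;
  sadj_sym : symmetric sadj;
  sadj_irr : irreflexive sadj }.

(* Edges, each unordered edge {x,y} listed once, as the ordered pair (x,y)
   with enum_rank x < enum_rank y. *)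
Definition edges (H : sgraph) : seq (svert H * svert H) :=
  [seq xy <- [seq (x, y) | x <- enum (svert H), y <- enum (svert H)]
     | sadj xy.1 xy.2 && (enum_rank xy.1 < enum_rank xy.2)].

Definition absdiff (a b : nat) : nat := if a <= b then b - a else a - b.

(* phi is a total (supergraceful) labeling of H: the p vertex labels and the
   q edge labels |phi x - phi y| are pairwise distinct and together form
   exactly {1, ..., p+q}. *)
Definition total_labeling (H : sgraph) (phi : svert H -> nat) : Prop :=
  perm_eq ([seq phi x | x <- enum (svert H)]
           ++ [seq absdiff (phi xy.1) (phi xy.2) | xy <- edges H])
          (iota 1 (#|svert H| + size (edges H))).

Definition supergraceful (H : sgraph) : Prop :=
  exists phi : svert H -> nat, total_labeling phi.

Definition has_subgraph_iso (H G : sgraph) : Prop :=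
  exists f : svert G -> svert H,
    injective f /\ forall x y : svert G, sadj x y -> sadj (f x) (f y).

From mathcomp Require Import all_boot.
From mathcomp Require Import zify.
Set Implicit Arguments. Unset Strict Implicit. Unset Printing Implicit Defensive.

(* Label the complete graph on n vertices by 1, 3, ..., 3^(n-1).  For i < j the
   edge label 3^j - 3^i lies strictly between 3^(j-1) and 3^j, so it determines
   j, hence i, and it is never a vertex label: all p + q labels are distinct
   numbers in [1, 3^n].  Adding one isolated vertex for every missing number
   gives a supergraceful graph, and every graph on n vertices embeds in K_n. *)

Section PowerDifferences.
Variable b : nat.
Hypothesis b_gt2 : 2 < b.
Let b_gt1 : 1 < b := ltnW b_gt2.

Lemma subn_expn_bounds i j : i <= j -> b ^ j < b ^ j.+1 - b ^ i < b ^ j.+1.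
Proof.
move=> le_ij.
have le_bij : b ^ i <= b ^ j by rewrite leq_pexp2l // ltnW.
have bi_gt0 : 0 < b ^ i by rewrite expn_gt0 ltnW.
have : 3 * b ^ j <= b * b ^ j by rewrite leq_mul.
rewrite expnS; lia.
Qed.

Lemma trunc_log_subn_expn i j : i <= j -> trunc_log b (b ^ j.+1 - b ^ i) = j.
Proof.
by move=> /subn_expn_bounds /andP[lo hi]; apply: trunc_log_eq; rewrite // ltnW.
Qed.

Lemma subn_expn_inj i j k l : i < j -> k < l ->
  b ^ j - b ^ i = b ^ l - b ^ k -> i = k /\ j = l.
Proof.
case: j l => [|j] [|l] //; rewrite !ltnS => le_ij le_kl eq_d.
have e_jl : j = l by rewrite -(trunc_log_subn_expn le_ij) eq_d trunc_log_subn_expn.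
subst l; split=> //; apply: (expnI b_gt1).
have := subn_expn_bounds le_ij; have := subn_expn_bounds le_kl; lia.
Qed.

Lemma subn_expn_neq_expn i j k : i < j -> b ^ j - b ^ i != b ^ k.
Proof.
case: j => // j; rewrite ltnS => le_ij; apply/eqP => eq_d.
by have := subn_expn_bounds le_ij; rewrite eq_d !ltn_exp2l //; lia.
Qed.

End PowerDifferences.

Lemma absdiffC a c : absdiff a c = absdiff c a.
Proof. by rewrite /absdiff; case: (leqP a c); case: (leqP c a); lia. Qed.

Lemma absdiff_expn b i j : 0 < b ->
  absdiff (b ^ i) (b ^ j) = b ^ maxn i j - b ^ minn i j.
Proof.
move=> b_gt0; rewrite /absdiff.
have [le_ij | /ltnW le_ji] := leqP i j; first by rewrite leq_pexp2l.
by have := leq_pexp2l b_gt0 le_ji; case: (leqP (b ^ i) (b ^ j)); lia.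
Qed.

Lemma absdiff_range a c M : 0 < a <= M -> 0 < c <= M -> a != c ->
  0 < absdiff a c <= M.
Proof. by rewrite /absdiff; case: (leqP a c); lia. Qed.

Lemma perm_iota_uniq (s : seq nat) M : uniq s ->
  (forall a, (a \in s) = (0 < a <= M)) -> perm_eq s (iota 1 (size s)).
Proof.
move=> s_uniq s_mem.
have s_iota : perm_eq s (iota 1 M).
  by apply: uniq_perm; rewrite ?iota_uniq // => a; rewrite s_mem mem_iota add1n.
by rewrite (perm_size s_iota) size_iota.
Qed.

Section Labels.
Variable H : sgraph.

Lemma mem_edges x y :
  ((x, y) \in edges H) = sadj x y && (enum_rank x < enum_rank y).
Proof. by rewrite mem_filter allpairs_f ?mem_enum ?andbT. Qed.

Lemma edges_uniq : uniq (edges H).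
Proof.
rewrite filter_uniq // allpairs_uniq ?enum_uniq //.
by move=> [a b] [c d] _ _ /= [-> ->].
Qed.

Definition vertex_labels (phi : svert H -> nat) : seq nat :=
  [seq phi x | x <- enum (svert H)].

Definition edge_labels (phi : svert H -> nat) : seq nat :=
  [seq absdiff (phi xy.1) (phi xy.2) | xy <- edges H].

Lemma total_labeling_uniq phi M :
  uniq (vertex_labels phi ++ edge_labels phi) ->
  (forall a, (a \in vertex_labels phi ++ edge_labels phi) = (0 < a <= M)) ->
  total_labeling phi.
Proof.
move=> l_uniq l_mem; rewrite /total_labeling cardT.
by have := perm_iota_uniq l_uniq l_mem; rewrite size_cat !size_map.
Qed.

Lemma edge_labelsP phi a :
  reflect (exists x y, sadj x y /\ a = absdiff (phi x) (phi y))
          (a \in edge_labels phi).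
Proof.
apply: (iffP mapP) => [[[x y]] | [x [y [xy ->]]]].
  by rewrite mem_edges => /andP[xy _] ->; exists x, y.
have : enum_rank x != enum_rank y.
  by apply: contraTneq xy => /enum_rank_inj ->; rewrite sadj_irr.
rewrite neq_ltn => /orP[] lt_xy.
- by exists (x, y); rewrite ?mem_edges ?xy.
- by exists (y, x); rewrite ?mem_edges 1?sadj_sym ?xy // absdiffC.
Qed.

Definition edge_label_injective (phi : svert H -> nat) : Prop :=
  forall x y x' y', sadj x y -> sadj x' y' ->
    absdiff (phi x) (phi y) = absdiff (phi x') (phi y') ->
    (x = x' /\ y = y') \/ (x = y' /\ y = x').

Lemma edge_labels_uniq phi : edge_label_injective phi -> uniq (edge_labels phi).
Proof.
move=> phi_inj; rewrite map_inj_in_uniq ?edges_uniq // => -[x y] [x' y'].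
rewrite !mem_edges => /andP[xy lt] /andP[xy' lt'] /= /(phi_inj _ _ _ _ xy xy').
by case=> [[-> ->] // | [ex ey]]; move: lt lt'; rewrite ex ey; lia.
Qed.

End Labels.

Lemma has_subgraph_iso_trans (F G H : sgraph) :
  has_subgraph_iso F G -> has_subgraph_iso G H -> has_subgraph_iso F H.
Proof.
move=> [f [f_inj f_adj]] [g [g_inj g_adj]].
by exists (f \o g); split=> [|x y /g_adj/f_adj //]; apply: inj_comp.
Qed.

Section IsolatedCompletion.
Variables (H : sgraph) (phi : svert H -> nat) (M : nat).
Hypothesis phi_inj : injective phi.
Hypothesis phi_range : forall x, 0 < phi x <= M.
Hypothesis phi_edge_inj : edge_label_injective phi.
Hypothesis edge_label_neq_vertex_label :
  forall x y z, sadj x y -> absdiff (phi x) (phi y) != phi z.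

Definition missing_label (k : 'I_M.+1) : bool :=
  (0 < k) && (val k \notin vertex_labels phi ++ edge_labels phi).

Definition completion_vert : finType :=
  (svert H + {k : 'I_M.+1 | missing_label k})%type.

Definition completion_adj : rel completion_vert := fun u v =>
  if (u, v) is (inl x, inl y) then sadj x y else false.

Lemma completion_adj_sym : symmetric completion_adj.
Proof. by rewrite /completion_adj; case=> [x|k] [y|l] //=; rewrite sadj_sym. Qed.

Lemma completion_adj_irr : irreflexive completion_adj.
Proof. by rewrite /completion_adj; case=> [x|k] //=; rewrite sadj_irr. Qed.

Definition completion : sgraph := SGraph completion_adj_sym completion_adj_irr.

Definition completion_label (u : svert completion) : nat :=
  match u with inl x => phi x | inr k => val (val k) end.

Lemma edge_label_range x y : sadj x y -> 0 < absdiff (phi x) (phi y) <= M.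
Proof.
move=> xy; apply: absdiff_range => //; apply: contraTneq xy => /phi_inj ->.
by rewrite sadj_irr.
Qed.

Lemma completion_label_inj : injective completion_label.
Proof.
have missing_neq_vertex_label x k : missing_label k -> phi x != val k.
  by case/andP=> _; apply: contraNneq => <-; rewrite mem_cat map_f ?mem_enum.
case=> [x|[k kP]] [y|[l lP]] /= eq_lab.
- by rewrite (phi_inj eq_lab).
- by move: (missing_neq_vertex_label x _ lP); rewrite eq_lab eqxx.
- by move: (missing_neq_vertex_label y _ kP); rewrite -eq_lab eqxx.
- by congr inr; apply/val_inj/val_inj.
Qed.

Lemma mem_completion_edge_labels a :
  (a \in edge_labels completion_label) = (a \in edge_labels phi).
Proof.
apply/edge_labelsP/edge_labelsP => [[[x|?] [[y|?] [//= xy ->]]] | [x [y xy]]].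
- by exists x, y.
- by exists (inl x), (inl y).
Qed.

Lemma completion_edge_label_injective : edge_label_injective completion_label.
Proof.
case=> [x|?] [y|?] [x'|?] [y'|?] // xy xy' /(phi_edge_inj xy xy').
by case=> -[-> ->]; [left | right].
Qed.

Lemma completion_labels_uniq :
  uniq (vertex_labels completion_label ++ edge_labels completion_label).
Proof.
rewrite cat_uniq map_inj_uniq ?enum_uniq ?edge_labels_uniq ?andbT //;
  last exact: completion_label_inj; last exact: completion_edge_label_injective.
apply/hasPn => _ /edge_labelsP[[x|?] [[y|?] [//= xy ->]]].
apply/mapP=> -[[z|[k /andP[_ kP]]] _ /= eq_lab].
- by move: (edge_label_neq_vertex_label z xy); rewrite eq_lab eqxx.
- move: kP; rewrite mem_cat => /norP[_ /edge_labelsP[]]; exists x, y.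
  by split; [exact: xy | exact: esym eq_lab].
Qed.

Lemma mem_completion_labels a :
  (a \in vertex_labels completion_label ++ edge_labels completion_label)
    = (0 < a <= M).
Proof.
rewrite mem_cat mem_completion_edge_labels; apply/idP/idP.
  case/orP=> [/mapP[[x|[k kP]] _ ->] | /edge_labelsP[x [y [xy ->]]]].
  - exact: phi_range.
  - by case/andP: (kP) => k_gt0 _; rewrite /= k_gt0 -ltnS ltn_ord.
  - exact: edge_label_range.
have vertex_label_mem u : completion_label u \in vertex_labels completion_label.
  by rewrite map_f ?mem_enum.
move=> /andP[a_gt0 a_le]; have [|] := boolP (a \in vertex_labels phi ++ edge_labels phi).
  rewrite mem_cat => /orP[/mapP[x _ ->] | ->]; last by rewrite orbT.
  by rewrite (vertex_label_mem (inl x)).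
rewrite -ltnS in a_le => a_missing.
have kP : missing_label (Ordinal a_le) by rewrite /missing_label a_gt0.
by rewrite (vertex_label_mem (inr (Sub _ kP))).
Qed.

Lemma completion_supergraceful : supergraceful completion.
Proof.
exists completion_label.
exact: total_labeling_uniq completion_labels_uniq mem_completion_labels.
Qed.

Lemma completion_has_subgraph : has_subgraph_iso completion H.
Proof. by exists inl; split=> // x y [->]. Qed.

End IsolatedCompletion.

Section Complete.
Variable n : nat.

Definition complete_adj : rel 'I_n := fun i j => i != j.

Lemma complete_adj_sym : symmetric complete_adj.
Proof. by move=> i j; rewrite /complete_adj eq_sym. Qed.

Lemma complete_adj_irr : irreflexive complete_adj.
Proof. by move=> i; rewrite /complete_adj eqxx. Qed.

Definition complete_sgraph : sgraph := SGraph complete_adj_sym complete_adj_irr.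

Lemma complete_sgraph_supergraph :
  exists H, supergraceful H /\ has_subgraph_iso H complete_sgraph.
Proof.
pose phi : svert complete_sgraph -> nat := fun i : 'I_n => 3 ^ i.
have phi_inj : injective phi by move=> i j /(expnI (isT : 1 < 3)) /val_inj.
have phi_range i : 0 < phi i <= 3 ^ n by rewrite expn_gt0 leq_pexp2l // ltnW.
have min_lt_max (i j : 'I_n) : complete_adj i j -> minn i j < maxn i j.
  by rewrite /complete_adj -(inj_eq val_inj) /=; lia.
have phi_edge_inj : edge_label_injective phi.
  move=> i j i' j' ij ij'; rewrite !absdiff_expn //.
  have lt_ij := min_lt_max _ _ ij; have lt_ij' := min_lt_max _ _ ij'.
  case/(subn_expn_inj (isT : 2 < 3) lt_ij lt_ij') => e_min e_max.
  have : ((i == i' :> nat) && (j == j' :> nat)) || ((i == j' :> nat) && (j == i' :> nat)).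
    by lia.
  by case/orP=> /andP[/eqP/val_inj -> /eqP/val_inj ->]; [left | right].
have edge_neq_vertex i j k : complete_adj i j -> absdiff (phi i) (phi j) != phi k.
  by move=> ij; rewrite absdiff_expn // subn_expn_neq_expn // min_lt_max.
exists (completion phi (3 ^ n)); split; last exact: completion_has_subgraph.
exact: completion_supergraceful phi_inj phi_range phi_edge_inj edge_neq_vertex.
Qed.

End Complete.

Lemma complete_sgraph_has_subgraph (G : sgraph) :
  has_subgraph_iso (complete_sgraph #|svert G|) G.
Proof.
exists enum_rank; split=> [|x y xy]; first exact: enum_rank_inj.
by apply: contraTneq xy => /enum_rank_inj ->; rewrite sadj_irr.
Qed.

Theorem theorem8p7 (G : sgraph) :
  exists H : sgraph, supergraceful H /\ has_subgraph_iso H G.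
Proof.
have [H [H_sg H_Kn]] := complete_sgraph_supergraph #|svert G|.
exists H; split=> //.
exact: has_subgraph_iso_trans H_Kn (complete_sgraph_has_subgraph G).
Qed.
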